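(* The maximal number of periods that an active candidate will be in the work state is $\lg_X{n}$.
   Context: A broadcast network is modeled as a connected graph G(V,E) with n nodes. In the fragment-level leader election algorithm, nodes are partitioned into fragments each with a candidate; id(F) = (size, candidate identity) ordered lexicographically; external edges are directed from the larger-id to the smaller-id fragment. Initially each node is a size-1 fragment in state wait. A fragment whose external edges are all incoming enters work, counts its size new_size, and compares with its maximal neighbor F': if new_size > X · size(F') (X > 1) it remains active, updates its size, makes its external edges outgoing and returns to wait; otherwise it joins F'. A fragment with no external edges is the leader. It has been shown that if a fragment enters the work state at two consecutive times and remains active, with known size k_i at the first entry and size k_{i+1} after counting at the second, then k_{i+1} ≥ X^2 · k_i. *)

From Stdlib Require Import Reals Lra Lia.
Open Scope R_scope.

Definition logb (X y : R) : R := ln y / ln X.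

(** Abstract trace of the work periods of one candidate (fragment) during
    which it remains active, in a network of [n] nodes, parameter [X].
    For the i-th work period (i < t):
      - [s i] : the known size of the fragment when entering work,
      - [c i] : the counted size new_size,
      - [m i] : the size of its maximal neighbouring fragment F'.
    Conditions:
      - initially each node is a size-1 fragment, so the known size is >= 1;
      - fragments are non-empty sets of nodes, so [1 <= m i] and [c i <= n];
      - the fragment remains active: new_size > X * size(F');
      - it updates its size: the known size at the next entry is [c i];
      - the established lemma: k_{i+1} >= X^2 * k_i, where k_i is the known
        size at an entry and k_{i+1} the counted size at the next entry. *)
Definition active_work_trace (n : nat) (X : R) (t : nat)
  (s c m : nat -> nat) : Prop :=
  (1 <= s 0)%nat /\
  (forall i, (i < t)%nat ->
     (1 <= m i)%nat /\ INR (c i) > X * INR (m i) /\ (c i <= n)%nat) /\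
  (forall i, (i + 1 < t)%nat -> s (i + 1)%nat = c i) /\
  (forall i, (i + 1 < t)%nat -> INR (c (i + 1)%nat) >= X ^ 2 * INR (s i)).

(* Every counted size of an active candidate is at least X times a non-empty
   neighbour, so c_0 >= X, and c_1 >= X^2 s_0 >= X^2; two work periods later
   the counted size has grown by X^2 again, since s_{j+1} = c_j.  Hence the
   j-th counted size is at least X^(j+1), and as it never exceeds n, the
   number t of work periods satisfies X^t <= n. *)
From Stdlib Require Import Reals.
From Stdlib Require Import Lra Lia Wf_nat.
Open Scope R_scope.

Lemma le_logb_of_pow_le (X y : R) (t : nat) :
  1 < X -> X ^ t <= y -> INR t <= logb X y.
Proof.
  intros HX Hpow.
  assert (HlnX : 0 < ln X) by (rewrite <- ln_1; apply ln_increasing; lra).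
  assert (Hpos : 0 < X ^ t) by (apply pow_lt; lra).
  unfold logb.
  apply Rmult_le_reg_r with (ln X); [exact HlnX|].
  unfold Rdiv. rewrite Rmult_assoc, Rinv_l, Rmult_1_r by lra.
  rewrite <- ln_pow by lra.
  destruct (Rle_lt_or_eq_dec _ _ Hpow) as [Hlt | ->].
  - left. apply ln_increasing; assumption.
  - right. reflexivity.
Qed.

Section ActiveWorkTrace.

Variables (n : nat) (X : R) (t : nat) (s c m : nat -> nat).
Hypothesis HX : 1 < X.
Hypothesis trace : active_work_trace n X t s c m.

Lemma count_le_n (j : nat) : (j < t)%nat -> INR (c j) <= INR n.
Proof.
  intros Hj. destruct trace as [_ [Hc _]].
  destruct (Hc j Hj) as [_ [_ Hcn]]. apply le_INR, Hcn.
Qed.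

Lemma count0_ge : (0 < t)%nat -> X <= INR (c 0).
Proof.
  intros Ht. destruct trace as [_ [Hc _]].
  destruct (Hc 0%nat Ht) as [Hm [Hcm _]].
  apply le_INR in Hm. simpl in Hm. nra.
Qed.

Lemma count1_ge : (1 < t)%nat -> X ^ 2 <= INR (c 1).
Proof.
  intros Ht. destruct trace as [Hs0 [_ [_ Hgr]]].
  specialize (Hgr 0%nat Ht). apply le_INR in Hs0. simpl in Hs0, Hgr |- *.
  assert (0 <= X * X * (INR (s 0) - 1)) by (apply Rmult_le_pos; nra).
  nra.
Qed.

Lemma count_ge_two_periods_later (j : nat) :
  (j + 2 < t)%nat -> X ^ 2 * INR (c j) <= INR (c (j + 2)%nat).
Proof.
  intros Hj. destruct trace as [_ [_ [Hsc Hgr]]].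
  specialize (Hgr (j + 1)%nat ltac:(lia)).
  rewrite (Hsc j ltac:(lia)) in Hgr.
  replace (j + 1 + 1)%nat with (j + 2)%nat in Hgr by lia.
  lra.
Qed.

Lemma count_ge_pow (j : nat) : (j < t)%nat -> X ^ S j <= INR (c j).
Proof.
  induction j as [j IH] using lt_wf_ind; intros Hj.
  destruct j as [| [| k]].
  - simpl. rewrite Rmult_1_r. apply count0_ge, Hj.
  - apply count1_ge, Hj.
  - assert (HX2 : 0 <= X ^ 2) by (apply pow_le; lra).
    assert (Hk := IH k ltac:(lia) ltac:(lia)).
    assert (Hstep := count_ge_two_periods_later k ltac:(lia)).
    replace (k + 2)%nat with (S (S k)) in Hstep by lia.
    replace (S (S (S k))) with (2 + S k)%nat by lia.
    rewrite pow_add. nra.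
Qed.

End ActiveWorkTrace.

Theorem corollary5 (n : nat) (X : R) (t : nat) (s c m : nat -> nat) :
  1 < X -> (1 <= n)%nat ->
  active_work_trace n X t s c m ->
  INR t <= logb X (INR n).
Proof.
  intros HX Hn trace.
  apply le_logb_of_pow_le; [exact HX|].
  destruct t as [| t'].
  - apply le_INR in Hn. simpl in Hn |- *. exact Hn.
  - apply Rle_trans with (INR (c t')).
    + apply (count_ge_pow n X (S t') s c m HX trace). lia.
    + apply (count_le_n n X (S t') s c m trace). lia.
Qed.
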